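(* Let $\alpha>0$, $h>0$, $D_x>0$, $D_y>0$, $A>0$, and let $x_m\sim\mathrm{Unif}[0,D_x]$, $y_m\sim\mathrm{Unif}[-D_y/2,D_y/2]$ be independent. Then the average rate $R_p=\mathbb{E}\left[\log_2\left(1+\frac{Ae^{-\alpha x_m}}{y_m^2+h^2}\right)\right]$ equals $$R_p=\frac{1}{D_xD_y}\Bigg(\frac{D_y}{\alpha\ln 2}\left(\mathrm{Li}_2\!\left(\frac{-Ae^{-\alpha D_x}}{h^2+\frac{D_y^2}{4}}\right)-\mathrm{Li}_2\!\left(\frac{-A}{h^2+\frac{D_y^2}{4}}\right)\right)-\frac{4hD_x}{\ln 2}\tan^{-1}\!\left(\frac{D_y}{2h}\right)-\frac{8}{\alpha\ln 2}\Big[F(x)\Big]_{\sqrt{A+h^2}}^{\sqrt{Ae^{-\alpha D_x}+h^2}}\Bigg),$$ where $[F(x)]_a^b=F(b)-F(a)$ and, for $x>h$, $$F(x)=\frac{D_y}{4}\ln\left(\frac{D_y^2}{4}+x^2\right)+x\tan^{-1}\!\left(\frac{D_y}{2x}\right)+\frac{h}{2}\tan^{-1}\!\left(\frac{D_y}{2x}\right)\ln\left(\frac{x-h}{x+h}\right)+\frac{h}{4}\big(z(x,h)-z(x,-h)\big),$$ $$z(x,y)=2\ln(x-y)\left(\tan^{-1}\!\left(\frac{2x}{D_y}\right)-\tan^{-1}\!\left(\frac{2y}{D_y}\right)\right)+2\,\mathrm{Im}\left\{\mathrm{Li}_2\!\left(\frac{y-x}{y-j\frac{D_y}{2}}\r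ight)\right\}.$$
   Context: This is the ergodic rate of a single-pinching-antenna system where the antenna is placed at $x_p=x_m$ directly above the user's $x$-coordinate on a waveguide at height $h$ with absorption coefficient $\alpha$; $A=\frac{\eta P_t}{\sigma^2}$ with $\eta,P_t,\sigma^2>0$. $\mathrm{Li}_2$ is the dilogarithm, $\mathrm{Li}_2(w)=-\int_0^w\frac{\ln(1-u)}{u}\,du$ (principal branch for complex arguments), $j$ is the imaginary unit, and $\mathrm{Im}$ denotes the imaginary part. *)

From Stdlib Require Import Reals.
From Coquelicot Require Import Coquelicot.
Open Scope R_scope.

(* Principal argument of a complex number u + i v, with values in (-PI, PI]
   (the usual atan2; arbitrary value 0 at the origin). *)
Definition Carg (z : Complex.C) : R :=
  let u := fst z in let v := snd z in
  if Rlt_dec 0 u then atan (v / u)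
  else if Rlt_dec u 0 then
    (if Rle_dec 0 v then atan (v / u) + PI else atan (v / u) - PI)
  else if Rlt_dec 0 v then PI / 2
  else if Rlt_dec v 0 then - (PI / 2) else 0.

Definition Clog (z : Complex.C) : Complex.C := (ln (Cmod z), Carg z).

(* Dilogarithm (principal branch): Li2(w) = - int_0^w ln(1-u)/u du, the
   integral taken along the straight segment u = t w, t in [0,1], i.e.
   Li2(w) = - int_0^1 Log(1 - t w) / t dt (real and imaginary
   parts integrated separately).  This is the principal branch for
   every w outside [1, +oo). *)
Definition Li2 (w : Complex.C) : Complex.C :=
  let L := fun t : R => Clog (Cminus (RtoC 1) (Cmult (RtoC t) w)) in
  (- RInt (fun t : R => Re (L t) / t) 0 1,
   - RInt (fun t : R => Im (L t) / t) 0 1).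

Definition log2 (x : R) : R := ln x / ln 2.

Definition zfun (Dy x y : R) : R :=
  2 * ln (x - y) * (atan (2 * x / Dy) - atan (2 * y / Dy))
  + 2 * Im (Li2 (Cdiv (RtoC (y - x)) (y, - (Dy / 2)))).

Definition Ffun (Dy h x : R) : R :=
  Dy / 4 * ln (Dy ^ 2 / 4 + x ^ 2)
  + x * atan (Dy / (2 * x))
  + h / 2 * atan (Dy / (2 * x)) * ln ((x - h) / (x + h))
  + h / 4 * (zfun Dy x h - zfun Dy x (- h)).

(* The inner integral is elementary, and for the outer one we check that the
   right-hand side, read as a function of the upper limit D_x, is a primitive
   of the inner integral.  The dilogarithms are differentiated straight from
   their integral definition by the fundamental theorem of calculus:
   d/dw Re Li2 w = - ln (1 - w) / w for real w < 1, and along a ray w = v d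
   with Im d > 0, d/dv Im Li2 (v d) = - Arg (1 - v d) / v.  For the dilogarithm
   in z(x,y) this gives (atan (2x/D_y) - atan (2y/D_y)) / (y - x), which cancels
   the derivative of ln (x - y); hence F'(x) = x^2 atan (D_y/(2x)) / (x^2 - h^2),
   exactly what the x_m-derivative of the right-hand side requires. *)

From Stdlib Require Import Reals Lra.
From Coquelicot Require Import Coquelicot.
Open Scope R_scope.

Lemma ln2_pos : 0 < ln 2.
Proof. pose proof ln_lt_2. lra. Qed.

Lemma atan_sub_gt (p q : R) : q < p ->
  atan p - atan q = PI / 2 - atan ((1 + p * q) / (p - q)).
Proof.
  intros Hqp.
  set (th := PI / 2 - (atan p - atan q)).
  assert (Hth : - (PI / 2) < th < PI / 2).
  { pose proof (atan_bound p); pose proof (atan_bound q).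
    pose proof (atan_increasing q p Hqp). unfold th. lra. }
  assert (Htan : tan th = (1 + p * q) / (p - q)).
  { unfold tan, th. rewrite sin_shift, cos_shift, cos_minus, sin_minus.
    rewrite !sin_atan, !cos_atan.
    assert (0 < sqrt (1 + p²)) by (apply sqrt_lt_R0; unfold Rsqr; nra).
    assert (0 < sqrt (1 + q²)) by (apply sqrt_lt_R0; unfold Rsqr; nra).
    field. lra. }
  rewrite <- Htan, atan_tan by exact Hth. unfold th. ring.
Qed.

Lemma Carg_Re_gt0 (z : C) : 0 < Re z -> Carg z = atan (Im z / Re z).
Proof.
  destruct z as [u v]; unfold Carg, Re, Im; simpl; intros Hu.
  destruct (Rlt_dec 0 u); [reflexivity | lra].
Qed.

Lemma Carg_Im_gt0 (z : C) : 0 < Im z -> Carg z = PI / 2 - atan (Re z / Im z).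
Proof.
  destruct z as [u v]; unfold Carg, Re, Im; simpl; intros Hv.
  destruct (Rlt_dec 0 u).
  - replace (v / u) with (/ (u / v)) by (field; lra).
    apply atan_inv, Rdiv_lt_0_compat; lra.
  - destruct (Rlt_dec u 0); [destruct (Rle_dec 0 v); [|lra] |].
    + replace (v / u) with (- / (- u / v)) by (field; lra).
      rewrite atan_opp, atan_inv by (apply Rdiv_lt_0_compat; lra).
      replace (- u / v) with (- (u / v)) by (field; lra).
      rewrite atan_opp. lra.
    + replace u with 0 by lra.
      destruct (Rlt_dec 0 v); [|lra].
      rewrite Rdiv_0_l, atan_0. ring.
Qed.

Lemma ex_derive_continuous_R (f : R -> R) (x : R) : ex_derive f x -> continuous f x.
Proof. apply (ex_derive_continuous (K := R_AbsRing) (V := R_NormedModule)). Qed.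

(* [phi u / u] extends continuously to [u = 0] by the derivative [phi' 0]. *)
Lemma ex_RInt_div_removable (phi : R -> R) (b : R) :
  phi 0 = 0 -> ex_derive phi 0 ->
  (forall u, Rmin 0 b <= u <= Rmax 0 b -> u <> 0 -> continuous phi u) ->
  ex_RInt (fun u => phi u / u) 0 b.
Proof.
  intros Hphi0 [l Hl] Hphi.
  set (g := fun u => if Req_EM_T u 0 then l else phi u / u).
  apply (ex_RInt_ext g).
  { intros u Hu. unfold g. destruct (Req_EM_T u 0); [|reflexivity].
    exfalso. unfold Rmin, Rmax in Hu. destruct (Rle_dec 0 b); lra. }
  apply (ex_RInt_continuous (V := R_CompleteNormedModule)). intros z Hz.
  destruct (Req_EM_T z 0) as [->|Hz0].
  - apply is_derive_Reals in Hl.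
    intros P [eps HP]. destruct (Hl eps (cond_pos eps)) as [del Hdel].
    exists del. intros y Hy. apply HP. unfold g.
    destruct (Req_EM_T 0 0); [|congruence].
    destruct (Req_EM_T y 0) as [Hy0|Hy0]; [apply ball_center|].
    change (Rabs (phi y / y - l) < eps).
    change (Rabs (y - 0) < del) in Hy. rewrite Rminus_0_r in Hy.
    specialize (Hdel y Hy0 Hy). rewrite Rplus_0_l, Hphi0, Rminus_0_r in Hdel.
    exact Hdel.
  - apply (continuous_ext_loc _ (fun u => phi u * / u)).
    { apply (filter_imp (fun y => y <> 0)).
      - intros y Hy. unfold g. destruct (Req_EM_T y 0); [congruence | reflexivity].
      - exists (mkposreal _ (Rabs_pos_lt z Hz0)). intros y Hy ->.
        change (Rabs (0 - z) < Rabs z) in Hy. rewrite Rminus_0_l, Rabs_Ropp in Hy. lra. }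
    apply (continuous_mult phi (fun u => / u)).
    + apply Hphi; auto.
    + apply continuous_Rinv; auto.
Qed.

Lemma is_derive_RInt_0 (f : R -> R) (b : R) :
  locally b (fun c => ex_RInt f 0 c) -> continuous f b ->
  is_derive (fun c => RInt f 0 c) b (f b).
Proof.
  intros Hex Hcont. apply (is_derive_RInt f _ 0 b); [|exact Hcont].
  generalize Hex. apply filter_imp. intros c Hc.
  apply (RInt_correct (V := R_CompleteNormedModule)). exact Hc.
Qed.

Lemma RInt_Li2_integrand_scale (g : C -> R) (d : C) (r : R) : r <> 0 ->
  ex_RInt (fun u => g (Clog (RtoC 1 - RtoC u * d)%C) / u) 0 r ->
  RInt (fun t => g (Clog (RtoC 1 - RtoC t * (RtoC r * d))%C) / t) 0 1
  = RInt (fun u => g (Clog (RtoC 1 - RtoC u * d)%C) / u) 0 r.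
Proof.
  intros Hr Hex.
  replace (RInt _ 0 r) with
    (RInt (fun u => g (Clog (RtoC 1 - RtoC u * d)%C) / u) (r * 0 + 0) (r * 1 + 0))
    by (f_equal; ring).
  rewrite <- RInt_comp_lin by (replace (r * 0 + 0) with 0 by ring;
                               replace (r * 1 + 0) with r by ring; exact Hex).
  apply RInt_ext. intros t _.
  rewrite Cmult_assoc, <- RtoC_mult, (Rmult_comm t r).
  unfold scal; simpl; unfold mult; simpl.
  rewrite Rplus_0_r.
  destruct (Req_dec t 0) as [->|Ht].
  - rewrite Rmult_0_r. unfold Rdiv. rewrite Rinv_0. ring.
  - field. auto.
Qed.

Lemma Re_Li2_ray (d : C) (r : R) : r <> 0 ->
  ex_RInt (fun u => Re (Clog (RtoC 1 - RtoC u * d)%C) / u) 0 r ->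
  Re (Li2 (RtoC r * d)%C) = - RInt (fun u => Re (Clog (RtoC 1 - RtoC u * d)%C) / u) 0 r.
Proof. intros Hr Hex. rewrite <- (RInt_Li2_integrand_scale Re d r Hr Hex). reflexivity. Qed.

Lemma Im_Li2_ray (d : C) (r : R) : r <> 0 ->
  ex_RInt (fun u => Im (Clog (RtoC 1 - RtoC u * d)%C) / u) 0 r ->
  Im (Li2 (RtoC r * d)%C) = - RInt (fun u => Im (Clog (RtoC 1 - RtoC u * d)%C) / u) 0 r.
Proof. intros Hr Hex. rewrite <- (RInt_Li2_integrand_scale Im d r Hr Hex). reflexivity. Qed.

Lemma Re_Clog_RtoC (x : R) : 0 < x -> Re (Clog (RtoC x)) = ln x.
Proof. intros Hx. unfold Clog, Re; simpl. rewrite Cmod_R, Rabs_pos_eq by lra. reflexivity. Qed.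

Lemma ex_RInt_ln_one_sub_div (b : R) : b < 1 -> ex_RInt (fun u => ln (1 - u) / u) 0 b.
Proof.
  intros Hb. apply (ex_RInt_div_removable (fun u => ln (1 - u))).
  - rewrite Rminus_0_r. apply ln_1.
  - auto_derive. lra.
  - intros u Hu _. apply ex_derive_continuous_R. auto_derive.
    unfold Rmin, Rmax in Hu. destruct (Rle_dec 0 b); lra.
Qed.

Lemma Re_Li2_real (w : R) : w < 1 -> w <> 0 ->
  Re (Li2 (RtoC w)) = - RInt (fun u => ln (1 - u) / u) 0 w.
Proof.
  intros Hw1 Hw0.
  assert (Hext : forall u, Rmin 0 w < u < Rmax 0 w ->
     ln (1 - u) / u = Re (Clog (RtoC 1 - RtoC u * RtoC 1)%C) / u).
  { intros u Hu. rewrite Cmult_1_r, <- RtoC_minus, Re_Clog_RtoC; [reflexivity|].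
    unfold Rmin, Rmax in Hu. destruct (Rle_dec 0 w); lra. }
  rewrite (RInt_ext _ _ _ _ Hext), <- (Re_Li2_ray (RtoC 1) w Hw0), Cmult_1_r; [reflexivity|].
  apply (ex_RInt_ext _ _ _ _ Hext), ex_RInt_ln_one_sub_div, Hw1.
Qed.

Lemma is_derive_Re_Li2_real (w : R) : w < 1 -> w <> 0 ->
  is_derive (fun v => Re (Li2 (RtoC v))) w (- ln (1 - w) / w).
Proof.
  intros Hw1 Hw0.
  assert (Hnear : locally w (fun v => v < 1 /\ v <> 0)).
  { apply filter_and; [apply open_lt, Hw1|].
    destruct (Rlt_dec w 0).
    - apply (filter_imp (fun v => v < 0)); [intros; lra | apply (open_lt 0); lra].
    - apply (filter_imp (fun v => 0 < v)); [intros; lra | apply (open_gt 0); lra]. }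
  apply (is_derive_ext_loc (fun v => - RInt (fun u => ln (1 - u) / u) 0 v)).
  { generalize Hnear. apply filter_imp. intros v [Hv1 Hv0]. symmetry. apply Re_Li2_real; auto. }
  replace (- ln (1 - w) / w) with (opp (ln (1 - w) / w)) by (unfold opp; simpl; field; auto).
  apply (is_derive_opp (fun v => RInt (fun u => ln (1 - u) / u) 0 v)).
  apply (is_derive_RInt_0 (fun u => ln (1 - u) / u)).
  - generalize Hnear. apply filter_imp. intros v [Hv1 _]. apply ex_RInt_ln_one_sub_div, Hv1.
  - apply ex_derive_continuous_R. auto_derive. lra.
Qed.

Lemma one_sub_ray (d : C) (u : R) :
  (RtoC 1 - RtoC u * d)%C = (1 - u * Re d, - (u * Im d)).
Proof. destruct d as [p q]. apply injective_projections; simpl; ring. Qed.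

Lemma Carg_one_sub_ray_near0 (d : C) (u : R) : 0 < 1 - u * Re d ->
  Carg (RtoC 1 - RtoC u * d)%C = atan (- (u * Im d) / (1 - u * Re d)).
Proof. intros H. rewrite one_sub_ray, Carg_Re_gt0; [reflexivity | exact H]. Qed.

Lemma Carg_one_sub_ray_neg (d : C) (u : R) : 0 < Im d -> u < 0 ->
  Carg (RtoC 1 - RtoC u * d)%C = PI / 2 - atan ((1 - u * Re d) / - (u * Im d)).
Proof. intros Hd Hu. rewrite one_sub_ray, Carg_Im_gt0; [reflexivity | simpl; nra]. Qed.

Section ImLi2Ray.

Variable d : C.
Hypothesis Hd : 0 < Im d.

Let arg_ray (u : R) : R := Carg (RtoC 1 - RtoC u * d)%C.

Lemma continuous_arg_ray (u : R) : u < 0 -> continuous arg_ray u.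
Proof.
  intros Hu.
  apply (continuous_ext_loc _ (fun v => PI / 2 - atan ((1 - v * Re d) / - (v * Im d)))).
  - apply (filter_imp (fun v => v < 0)); [|apply (open_lt 0); exact Hu].
    intros v Hv. symmetry. apply Carg_one_sub_ray_neg; assumption.
  - apply ex_derive_continuous_R. auto_derive. nra.
Qed.

Lemma ex_RInt_arg_ray_div (b : R) : b <= 0 -> ex_RInt (fun u => arg_ray u / u) 0 b.
Proof.
  intros Hb.
  assert (Hnear0 : locally 0 (fun u => 0 < 1 - u * Re d)).
  { assert (Hc : continuous (fun u => 1 - u * Re d) 0)
      by (apply ex_derive_continuous_R; auto_derive; exact I).
    apply Hc, (open_gt 0). lra. }
  apply ex_RInt_div_removable.
  - unfold arg_ray. rewrite Carg_one_sub_ray_near0 by lra.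
    rewrite Rmult_0_l, Ropp_0, Rdiv_0_l. apply atan_0.
  - apply (ex_derive_ext_loc (fun u => atan (- (u * Im d) / (1 - u * Re d)))).
    + generalize Hnear0. apply filter_imp. intros u Hu.
      symmetry. apply Carg_one_sub_ray_near0, Hu.
    + auto_derive. lra.
  - intros u Hu Hu0. apply continuous_arg_ray.
    unfold Rmin, Rmax in Hu. destruct (Rle_dec 0 b); lra.
Qed.

Lemma Im_Li2_ray_neg (v : R) : v < 0 ->
  Im (Li2 (RtoC v * d)%C) = - RInt (fun u => arg_ray u / u) 0 v.
Proof. intros Hv. apply Im_Li2_ray; [lra | apply ex_RInt_arg_ray_div; lra]. Qed.

Lemma is_derive_Im_Li2_ray (v : R) : v < 0 ->
  is_derive (fun s => Im (Li2 (RtoC s * d)%C)) v (- arg_ray v / v).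
Proof.
  intros Hv.
  assert (Hnear : locally v (fun s => s < 0)) by (apply (open_lt 0); exact Hv).
  apply (is_derive_ext_loc (fun s => - RInt (fun u => arg_ray u / u) 0 s)).
  { generalize Hnear. apply filter_imp. intros s Hs. symmetry. apply Im_Li2_ray_neg, Hs. }
  replace (- arg_ray v / v) with (opp (arg_ray v / v)) by (unfold opp; simpl; field; lra).
  apply (is_derive_opp (fun s => RInt (fun u => arg_ray u / u) 0 s)).
  apply (is_derive_RInt_0 (fun u => arg_ray u / u)).
  - generalize Hnear. apply filter_imp. intros s Hs. apply ex_RInt_arg_ray_div. lra.
  - apply (continuous_mult arg_ray (fun u => / u)).
    + apply continuous_arg_ray, Hv.
    + apply continuous_Rinv. lra.
Qed.

End ImLi2Ray.

Lemma Carg_one_sub_mul_Cinv (a y x : R) : 0 < a -> y < x ->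
  Carg (RtoC 1 - RtoC (y - x) * Cinv (y, - a)%R)%C = atan (x / a) - atan (y / a).
Proof.
  intros Ha Hyx. assert (Hn : 0 < y ^ 2 + (- a) ^ 2) by nra.
  rewrite Carg_one_sub_ray_neg by (simpl; try apply Rdiv_lt_0_compat; lra).
  rewrite (atan_sub_gt (x / a) (y / a)) by (apply Rmult_lt_compat_r; [apply Rinv_0_lt_compat|]; lra).
  do 2 f_equal. simpl. field. lra.
Qed.

Lemma is_derive_zfun (Dy y x : R) : 0 < Dy -> y < x ->
  is_derive (fun t => zfun Dy t y) x (4 * Dy * ln (x - y) / (Dy ^ 2 + 4 * x ^ 2)).
Proof.
  intros HDy Hyx.
  set (d := Cinv (y, - (Dy / 2))).
  assert (Hd : 0 < Im d) by (unfold d; simpl; apply Rdiv_lt_0_compat; nra).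
  assert (HLi2 : is_derive (fun t => Im (Li2 (RtoC (y - t) * d)%C)) x
                   ((atan (2 * x / Dy) - atan (2 * y / Dy)) / (y - x))).
  { replace ((atan (2 * x / Dy) - atan (2 * y / Dy)) / (y - x))
      with (scal (-1) (- Carg (RtoC 1 - RtoC (y - x) * d)%C / (y - x))).
    - apply (is_derive_comp (fun s => Im (Li2 (RtoC s * d)%C)) (fun t => y - t)).
      + apply is_derive_Im_Li2_ray; [exact Hd | lra].
      + auto_derive; [exact I | ring].
    - unfold d. rewrite Carg_one_sub_mul_Cinv by lra.
      replace (2 * x / Dy) with (x / (Dy / 2)) by (field; lra).
      replace (2 * y / Dy) with (y / (Dy / 2)) by (field; lra).
      unfold scal; simpl; unfold mult; simpl. field. lra. }
  assert (Hlog : is_derive (fun t => 2 * ln (t - y) * (atan (2 * t / Dy) - atan (2 * y / Dy))) x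
     (2 * (atan (2 * x / Dy) - atan (2 * y / Dy)) / (x - y)
      + 4 * Dy * ln (x - y) / (Dy ^ 2 + 4 * x ^ 2))).
  { auto_derive; [lra|]. unfold Rdiv, Rminus. field. repeat split; nra. }
  replace (4 * Dy * ln (x - y) / (Dy ^ 2 + 4 * x ^ 2)) with
    (2 * (atan (2 * x / Dy) - atan (2 * y / Dy)) / (x - y)
     + 4 * Dy * ln (x - y) / (Dy ^ 2 + 4 * x ^ 2)
     + 2 * ((atan (2 * x / Dy) - atan (2 * y / Dy)) / (y - x))) by (field; split; nra).
  apply (is_derive_plus _ (fun t => 2 * Im (Li2 (RtoC (y - t) * d)%C))); [exact Hlog|].
  apply is_derive_scal, HLi2.
Qed.

Lemma is_derive_Ffun (Dy h x : R) : 0 < Dy -> 0 < h -> h < x ->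
  is_derive (Ffun Dy h) x (x ^ 2 * atan (Dy / (2 * x)) / (x ^ 2 - h ^ 2)).
Proof.
  intros HDy Hh Hhx.
  set (E := fun t => Dy / 4 * ln (Dy ^ 2 / 4 + t ^ 2) + t * atan (Dy / (2 * t))
                     + h / 2 * atan (Dy / (2 * t)) * ln ((t - h) / (t + h))).
  assert (HE : is_derive E x (x ^ 2 * atan (Dy / (2 * x)) / (x ^ 2 - h ^ 2)
                              - h * Dy * ln ((x - h) / (x + h)) / (Dy ^ 2 + 4 * x ^ 2))).
  { unfold E. auto_derive.
    - repeat split; try nra. apply Rdiv_lt_0_compat; lra.
    - unfold Rdiv, Rminus. field. repeat split; nra. }
  replace (x ^ 2 * atan (Dy / (2 * x)) / (x ^ 2 - h ^ 2)) with
    (x ^ 2 * atan (Dy / (2 * x)) / (x ^ 2 - h ^ 2)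
     - h * Dy * ln ((x - h) / (x + h)) / (Dy ^ 2 + 4 * x ^ 2)
     + h / 4 * (4 * Dy * ln (x - h) / (Dy ^ 2 + 4 * x ^ 2)
                - 4 * Dy * ln (x - - h) / (Dy ^ 2 + 4 * x ^ 2))).
  2: { rewrite ln_div by lra. replace (x - - h) with (x + h) by ring.
       field. nra. }
  apply (is_derive_plus E (fun t => h / 4 * (zfun Dy t h - zfun Dy t (- h)))); [exact HE|].
  apply is_derive_scal, (is_derive_minus (fun t => zfun Dy t h) (fun t => zfun Dy t (- h)));
    apply is_derive_zfun; lra.
Qed.

Definition ln_sq_add_primitive (c y : R) : R :=
  y * ln (y ^ 2 + c ^ 2) - 2 * y + 2 * c * atan (y / c).

Lemma is_derive_ln_sq_add_primitive (c y : R) : 0 < c ->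
  is_derive (ln_sq_add_primitive c) y (ln (y ^ 2 + c ^ 2)).
Proof.
  intros Hc. unfold ln_sq_add_primitive. auto_derive.
  - repeat split; nra.
  - replace (y * (y * 1) + c * (c * 1)) with (y ^ 2 + c ^ 2) by ring.
    field. split; nra.
Qed.

Definition inner_rate (h Dy B : R) : R :=
  2 * (ln_sq_add_primitive (sqrt (B + h ^ 2)) (Dy / 2) - ln_sq_add_primitive h (Dy / 2)) / ln 2.

(* [log2 (1 + B / (y^2 + h^2)) = (ln (y^2 + s^2) - ln (y^2 + h^2)) / ln 2] with [s^2 = B + h^2],
   and both primitives are odd in [y]. *)
Lemma RInt_log2_one_add_div_sq (B h Dy : R) : 0 < B -> 0 < h ->
  RInt (fun y => log2 (1 + B / (y ^ 2 + h ^ 2))) (- (Dy / 2)) (Dy / 2) = inner_rate h Dy B.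
Proof.
  intros HB Hh.
  assert (Hs : 0 < sqrt (B + h ^ 2)) by (apply sqrt_lt_R0; nra).
  assert (Hs2 : sqrt (B + h ^ 2) ^ 2 = B + h ^ 2) by (apply pow2_sqrt; nra).
  set (s := sqrt (B + h ^ 2)) in *.
  set (P := fun y => (ln_sq_add_primitive s y - ln_sq_add_primitive h y) / ln 2).
  assert (Hodd : forall c y, ln_sq_add_primitive c (- y) = - ln_sq_add_primitive c y).
  { intros c y. unfold ln_sq_add_primitive.
    replace (- y / c) with (- (y / c)) by (unfold Rdiv; ring). rewrite atan_opp.
    replace ((- y) ^ 2) with (y ^ 2) by ring. ring. }
  apply is_RInt_unique.
  replace (inner_rate h Dy B) with (minus (P (Dy / 2)) (P (- (Dy / 2)))).
  2: { unfold minus, plus, opp; simpl. unfold P, inner_rate. fold s. rewrite !Hodd. field. apply Rgt_not_eq, ln2_pos. }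
  apply (is_RInt_derive (V := R_CompleteNormedModule)).
  - intros y _. unfold P.
    replace (log2 (1 + B / (y ^ 2 + h ^ 2)))
      with ((ln (y ^ 2 + s ^ 2) - ln (y ^ 2 + h ^ 2)) / ln 2).
    + apply (is_derive_scal_l (fun y => ln_sq_add_primitive s y - ln_sq_add_primitive h y) y
               (ln (y ^ 2 + s ^ 2) - ln (y ^ 2 + h ^ 2)) (/ ln 2)).
      apply (is_derive_minus (ln_sq_add_primitive s) (ln_sq_add_primitive h));
        apply is_derive_ln_sq_add_primitive; assumption.
    + unfold log2. rewrite Hs2, <- ln_div by nra. do 2 f_equal. field. nra.
  - intros y _. apply ex_derive_continuous_R. unfold log2. auto_derive. repeat split; try nra.
    assert (0 < B * / (y * (y * 1) + h * (h * 1))) by (apply Rdiv_lt_0_compat; nra). lra.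
Qed.

Definition rate_primitive (alpha h Dy A x : R) : R :=
  Dy / (alpha * ln 2) * Re (Li2 (RtoC (- A * exp (- alpha * x) / (h ^ 2 + Dy ^ 2 / 4))))
  - 4 * h * x / ln 2 * atan (Dy / (2 * h))
  - 8 / (alpha * ln 2) * Ffun Dy h (sqrt (A * exp (- alpha * x) + h ^ 2)).

Section RatePrimitive.

Variables alpha h Dy A : R.
Hypotheses (Halpha : 0 < alpha) (Hh : 0 < h) (HDy : 0 < Dy) (HA : 0 < A).

Lemma is_derive_Re_Li2_exp (c x : R) : 0 < c ->
  is_derive (fun t => Re (Li2 (RtoC (- A * exp (- alpha * t) / c)))) x
    (alpha * ln (1 + A * exp (- alpha * x) / c)).
Proof.
  intros Hc. pose proof (exp_pos (- alpha * x)) as Hexp.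
  set (w := - A * exp (- alpha * x) / c).
  assert (Hw : w < 0) by (apply Rdiv_neg_pos; nra).
  replace (alpha * ln (1 + A * exp (- alpha * x) / c)) with (scal (- alpha * w) (- ln (1 - w) / w)).
  - apply (is_derive_comp (fun v => Re (Li2 (RtoC v))) (fun t => - A * exp (- alpha * t) / c)).
    + apply is_derive_Re_Li2_real; lra.
    + auto_derive; [lra|]. unfold w. field. lra.
  - unfold scal; simpl; unfold mult; simpl.
    replace (1 - w) with (1 + A * exp (- alpha * x) / c) by (unfold w; field; lra).
    field. lra.
Qed.

Lemma is_derive_Ffun_sqrt (x : R) :
  is_derive (fun t => Ffun Dy h (sqrt (A * exp (- alpha * t) + h ^ 2))) x
    (- alpha / 2 * sqrt (A * exp (- alpha * x) + h ^ 2)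
       * atan (Dy / (2 * sqrt (A * exp (- alpha * x) + h ^ 2)))).
Proof.
  pose proof (exp_pos (- alpha * x)) as Hexp.
  assert (HB : 0 < A * exp (- alpha * x)) by nra.
  assert (Hs2 : sqrt (A * exp (- alpha * x) + h ^ 2) ^ 2 = A * exp (- alpha * x) + h ^ 2)
    by (apply pow2_sqrt; nra).
  assert (Hhs : h < sqrt (A * exp (- alpha * x) + h ^ 2)).
  { rewrite <- (sqrt_pow2 h) at 1 by lra. apply sqrt_lt_1; nra. }
  set (s := sqrt (A * exp (- alpha * x) + h ^ 2)) in *.
  replace (- alpha / 2 * s * atan (Dy / (2 * s))) with
    (scal (- alpha * (A * exp (- alpha * x)) / (2 * s)) (s ^ 2 * atan (Dy / (2 * s)) / (s ^ 2 - h ^ 2))).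
  - apply (is_derive_comp (Ffun Dy h) (fun t => sqrt (A * exp (- alpha * t) + h ^ 2))).
    + apply is_derive_Ffun; lra.
    + auto_derive; [nra|]. replace (h * (h * 1)) with (h ^ 2) by ring. fold s. field. lra.
  - unfold scal; simpl; unfold mult; simpl.
    replace (A * exp (- alpha * x)) with (s ^ 2 - h ^ 2) by lra. field. nra.
Qed.

Lemma is_derive_rate_primitive (x : R) :
  is_derive (rate_primitive alpha h Dy A) x (inner_rate h Dy (A * exp (- alpha * x))).
Proof.
  pose proof ln2_pos as Hln2. pose proof (exp_pos (- alpha * x)) as Hexp.
  assert (Hs : 0 < sqrt (A * exp (- alpha * x) + h ^ 2)) by (apply sqrt_lt_R0; nra).
  assert (Hs2 : sqrt (A * exp (- alpha * x) + h ^ 2) ^ 2 = A * exp (- alpha * x) + h ^ 2)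
    by (apply pow2_sqrt; nra).
  set (s := sqrt (A * exp (- alpha * x) + h ^ 2)) in *.
  replace (inner_rate h Dy (A * exp (- alpha * x))) with
    (Dy / (alpha * ln 2) * (alpha * ln (1 + A * exp (- alpha * x) / (h ^ 2 + Dy ^ 2 / 4)))
     - 4 * h / ln 2 * atan (Dy / (2 * h))
     - 8 / (alpha * ln 2) * (- alpha / 2 * s * atan (Dy / (2 * s)))).
  - apply (is_derive_minus
      (fun t => Dy / (alpha * ln 2) * Re (Li2 (RtoC (- A * exp (- alpha * t) / (h ^ 2 + Dy ^ 2 / 4))))
                - 4 * h * t / ln 2 * atan (Dy / (2 * h)))
      (fun t => 8 / (alpha * ln 2) * Ffun Dy h (sqrt (A * exp (- alpha * t) + h ^ 2)))).
    + apply (is_derive_minus _ (fun t => 4 * h * t / ln 2 * atan (Dy / (2 * h)))).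
      * apply is_derive_scal, is_derive_Re_Li2_exp. nra.
      * auto_derive; [exact I|]. field. lra.
    + apply is_derive_scal, is_derive_Ffun_sqrt.
  - unfold inner_rate, ln_sq_add_primitive. fold s. rewrite Hs2.
    replace (1 + A * exp (- alpha * x) / (h ^ 2 + Dy ^ 2 / 4))
      with (((Dy / 2) ^ 2 + (A * exp (- alpha * x) + h ^ 2)) / ((Dy / 2) ^ 2 + h ^ 2))
      by (field; nra).
    rewrite ln_div by nra.
    replace (Dy / 2 / s) with (Dy / (2 * s)) by (field; lra).
    replace (Dy / 2 / h) with (Dy / (2 * h)) by (field; lra).
    field. lra.
Qed.

Lemma continuous_inner_rate_exp (x : R) :
  continuous (fun t => inner_rate h Dy (A * exp (- alpha * t))) x.
Proof.
  pose proof (exp_pos (- alpha * x)) as Hexp.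
  assert (Hs : 0 < sqrt (A * exp (- alpha * x) + h ^ 2)) by (apply sqrt_lt_R0; nra).
  apply ex_derive_continuous_R. unfold inner_rate, ln_sq_add_primitive. auto_derive.
  replace (h * (h * 1)) with (h ^ 2) by ring. repeat split; nra.
Qed.

End RatePrimitive.

Theorem proposition3 (alpha h Dx Dy A : R)
  (Halpha : 0 < alpha) (Hh : 0 < h) (HDx : 0 < Dx) (HDy : 0 < Dy) (HA : 0 < A) :
  1 / (Dx * Dy) *
    RInt (fun xm => RInt (fun ym =>
            log2 (1 + A * exp (- alpha * xm) / (ym ^ 2 + h ^ 2))) (- (Dy / 2)) (Dy / 2))
         0 Dx
  =
  1 / (Dx * Dy) *
   ( Dy / (alpha * ln 2) *
       (Re (Li2 (RtoC (- A * exp (- alpha * Dx) / (h ^ 2 + Dy ^ 2 / 4))))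
        - Re (Li2 (RtoC (- A / (h ^ 2 + Dy ^ 2 / 4)))))
     - 4 * h * Dx / ln 2 * atan (Dy / (2 * h))
     - 8 / (alpha * ln 2) *
       (Ffun Dy h (sqrt (A * exp (- alpha * Dx) + h ^ 2))
        - Ffun Dy h (sqrt (A + h ^ 2))) ).
Proof.
  rewrite (RInt_ext _ (fun x => inner_rate h Dy (A * exp (- alpha * x)))).
  2: { intros x _. apply RInt_log2_one_add_div_sq; [|exact Hh].
       pose proof (exp_pos (- alpha * x)). nra. }
  rewrite (is_RInt_unique _ _ _ _ (is_RInt_derive (V := R_CompleteNormedModule) _ _ 0 Dx
             (fun x _ => is_derive_rate_primitive alpha h Dy A Halpha Hh HDy HA x)
             (fun x _ => continuous_inner_rate_exp alpha h Dy A HA x))).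
  change (minus ?a ?b) with (a - b). unfold rate_primitive.
  rewrite Rmult_0_r, exp_0, !Rmult_1_r.
  unfold Rdiv. ring.
Qed.
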